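(* Let $\{A^i\}_{i=1}^N$ and $\{\tilde A^i\}_{i=1}^N$ be injective fMPSs of bond dimension $2n$ with Wall invariant $(+)$, both in canonical form. Then $\{A^i\}_i \sim \{\tilde A^i\}_i$ holds if and only if there exist a unitary matrix $V\in \mathrm{U}(2n)$ and a phase $e^{i\beta}\in \mathrm{U}(1)$ such that $$\tilde A^i = e^{i\beta} V^\dagger A^i V \quad \text{for all } i.$$ In this case $e^{i\beta}$ is unique and $V$ is unique up to multiplication by a $\mathrm{U}(1)$ phase. Moreover, if $u$ and $\tilde u$ are Wall matrices of $\{A^i\}_i$ and $\{\tilde A^i\}_i$ respectively, then $\tilde u = \eta\, V^\dagger u V$ for some sign $\eta\in\{\pm1\}$. All of these statements remain true if the hypothesis $\{A^i\}_i\sim\{\tilde A^i\}_i$ is replaced by $\{A^i\}_i\sim_{\rm PBC}\{\tilde A^i\}_i$.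
   Context: Fix integers $N,n\ge 1$ and a parity function $i\mapsto |i|\in\{0,1\}$ on $\{1,\dots,N\}$. Let $\sigma_x,\sigma_z$ be the Pauli matrices. An fMPS of bond dimension $2n$ is a tuple $\{A^i\}_{i=1}^N$ of complex $2n\times 2n$ matrices for which there is a matrix $Z$ (a grading matrix), unitarily equivalent to $\sigma_z\otimes 1_n$, with $(-1)^{|i|}A^i = Z A^i Z$ for all $i$. It is in canonical form if $\sum_i A^iA^{i\dagger}=1_{2n}$. It is injective with Wall invariant $(+)$ if there is a fixed $l\in\mathbb N$ such that the products $A^{i_1}\cdots A^{i_l}$ over all $(i_1,\dots,i_l)$ span $\mathrm M_{2n}(\mathbb C)$; in that case the grading matrix is unique up to sign and a Wall matrix is $u=\pm Z$ (so $u^2=1$). Two fMPSs are gauge equivalent, $\{A^i\}_i\sim\{\tilde A^i\}_i$, if for every $L\in\mathbb N$ there is $\alpha_L\in\mathbb R$ with $\mathrm{tr}[A^{i_1}\cdots A^{i_L}] = e^{i\alpha_L}\mathrm{tr}[\tilde A^{i_1}\cdots\tilde A^{i_L}]$ for all $i_1,\dots,i_L$. They are gauge equivalent in PBC, $\{A^i\}_i\sim_{\rm PBC}\{\tilde A^i\}_i$, if for every $L$ there is $\alpha_L$ with $\mathrm{tr}[uA^{i_1}\cdots A^{i_L}] = e^{i\alpha_L}\mathrm{tr}[\tilde u\tilde A^{i_1}\cdots\tilde A^{i_L}]$ for all $i_1,\dots,i_L$, where $u,\tilde u$ are the respective Wall matrices. *)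

From HB Require Import structures.
From mathcomp Require Import all_boot all_order all_algebra.
From mathcomp Require Import spectral sesquilinear.
From mathcomp Require Import complex.
From mathcomp Require Import reals.
Set Implicit Arguments.
Unset Strict Implicit.
Unset Printing Implicit Defensive.
Import Order.TTheory GRing.Theory Num.Theory.
Local Open Scope ring_scope.
Local Open Scope sesquilinear_scope.

Section FMPS.
Variable C : numClosedFieldType.
(* bond dimension 2n is written n + n *)
Variables (n N : nat).
(* the parity function i |-> |i|, true = odd; sites are indexed by 'I_N *)
Variable par : 'I_N -> bool.

Definition sigmaz_id : 'M[C]_(n + n) := block_mx 1%:M 0 0 (- 1%:M).

Definition grading_like (Z : 'M[C]_(n + n)) : Prop :=
  exists W : 'M[C]_(n + n), W \is unitarymx /\ Z = W *m sigmaz_id *m W^t*.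

Definition is_grading (A : 'I_N -> 'M[C]_(n + n)) (Z : 'M[C]_(n + n)) : Prop :=
  grading_like Z /\ forall i, (-1) ^+ par i *: A i = Z *m A i *m Z.

Definition is_fMPS (A : 'I_N -> 'M[C]_(n + n)) : Prop :=
  exists Z, is_grading A Z.

Definition canonical_fMPS (A : 'I_N -> 'M[C]_(n + n)) : Prop :=
  \sum_i A i *m (A i)^t* = 1%:M.

Definition wprod (A : 'I_N -> 'M[C]_(n + n)) (w : seq 'I_N) : 'M[C]_(n + n) :=
  foldr (fun i M => A i *m M) 1%:M w.

Definition injective_plus (A : 'I_N -> 'M[C]_(n + n)) : Prop :=
  exists l : nat, forall M : 'M[C]_(n + n),
    exists c : l.-tuple 'I_N -> C, M = \sum_(w : l.-tuple 'I_N) c w *: wprod A w.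

Definition is_wall (A : 'I_N -> 'M[C]_(n + n)) (u : 'M[C]_(n + n)) : Prop :=
  exists Z, is_grading A Z /\ (u = Z \/ u = - Z).

(* e^{i alpha} with alpha real ranges exactly over the unit-modulus scalars *)
Definition gauge_equiv (A At : 'I_N -> 'M[C]_(n + n)) : Prop :=
  forall L : nat, exists ph : C, `|ph| = 1 /\
    forall w : L.-tuple 'I_N, \tr (wprod A w) = ph * \tr (wprod At w).

Definition gauge_equiv_PBC (A At : 'I_N -> 'M[C]_(n + n)) : Prop :=
  exists u ut, is_wall A u /\ is_wall At ut /\
  forall L : nat, exists ph : C, `|ph| = 1 /\
    forall w : L.-tuple 'I_N, \tr (u *m wprod A w) = ph * \tr (ut *m wprod At w).

Definition unit_related (A At : 'I_N -> 'M[C]_(n + n))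
  (V : 'M[C]_(n + n)) (b : C) : Prop :=
  V \is unitarymx /\ `|b| = 1 /\ forall i, At i = b *: (V^t* *m A i *m V).

End FMPS.

(* Injectivity makes the products of any large enough length span all matrices,
   so the trace identities force every linear relation among the products of the
   [A i] to hold among those of the [At i].  The induced linear maps
   [A^w |-> At^w] on lengths [K], [2K] and [2K + 1] are then a scaled inner
   automorphism (Skolem-Noether) and bimodule maps over it, whence
   [At i = lam X (A i) X^-1].  Comparing the Wall matrices gives [|lam| = 1];
   canonical form then makes [X^-1 X^-1*] a hermitian fixed point of the unital
   map [Y |-> sum_i A i Y (A i)^*], which is scalar because the kernel of
   [mu - Y], for [mu] its top eigenvalue, is invariant under all [A i].  So [X]
   is a multiple of a unitary.  Uniqueness, and that of the Wall matrices up to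
   sign, hold because a matrix commuting with every [A i] up to a phase is
   scalar. *)

From HB Require Import structures.
From mathcomp Require Import all_boot all_order all_algebra.
From mathcomp Require Import spectral sesquilinear complex reals.
From Stdlib Require Import ClassicalEpsilon.
Set Implicit Arguments.
Unset Strict Implicit.
Unset Printing Implicit Defensive.
Import Order.TTheory GRing.Theory Num.Theory.
Local Open Scope ring_scope.
Local Open Scope sesquilinear_scope.

Section Words.
Variables (R : comNzRingType) (m N : nat).
Implicit Types (A : 'I_N -> 'M[R]_m) (w : seq 'I_N) (s t : seq (R * seq 'I_N)).

Definition word_mx A w : 'M[R]_m := foldr (fun i M => A i *m M) 1%:M w.

(* [s] is a formal linear combination of words, as a list of (coefficient, word). *)
Definition comb_mx A s : 'M[R]_m := \sum_(p <- s) p.1 *: word_mx A p.2.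

Definition homog L s := all (fun p : R * seq 'I_N => size p.2 == L) s.

Definition words_span A L :=
  forall M : 'M[R]_m, exists2 s, homog L s & comb_mx A s = M.

Definition comb_scale (a : R) s := [seq (a * p.1, p.2) | p <- s].
Definition comb_mul s t := [seq (p.1 * q.1, p.2 ++ q.2) | p <- s, q <- t].

Lemma word_mx_cat A w1 w2 : word_mx A (w1 ++ w2) = word_mx A w1 *m word_mx A w2.
Proof. by elim: w1 => [|i w IH] /=; rewrite ?mul1mx // IH mulmxA. Qed.

Lemma comb_mx_letter A i : comb_mx A [:: (1, [:: i])] = A i.
Proof. by rewrite /comb_mx big_seq1 scale1r /= mulmx1. Qed.

Lemma comb_mx_cat A s t : comb_mx A (s ++ t) = comb_mx A s + comb_mx A t.
Proof. exact: big_cat. Qed.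

Lemma comb_mx_scale A a s : comb_mx A (comb_scale a s) = a *: comb_mx A s.
Proof.
by rewrite /comb_mx big_map scaler_sumr; apply: eq_bigr => p _; rewrite scalerA.
Qed.

Lemma comb_mx_mul A s t : comb_mx A (comb_mul s t) = comb_mx A s *m comb_mx A t.
Proof.
rewrite /comb_mx big_allpairs_dep mulmx_suml; apply: eq_bigr => p _.
rewrite mulmx_sumr; apply: eq_bigr => q _ /=.
by rewrite word_mx_cat -scalemxAl -scalemxAr scalerA.
Qed.

Lemma homog_cat L s t : homog L (s ++ t) = homog L s && homog L t.
Proof. exact: all_cat. Qed.

Lemma homog_scale L a s : homog L (comb_scale a s) = homog L s.
Proof. exact: all_map. Qed.

Lemma homog_mul L1 L2 s t :
  homog L1 s -> homog L2 t -> homog (L1 + L2) (comb_mul s t).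
Proof.
move=> /allP Hs /allP Ht; apply/allP => r /allpairsP [[p q] [/= ps qt ->]] /=.
by rewrite size_cat (eqP (Hs _ ps)) (eqP (Ht _ qt)).
Qed.

Lemma homog_sum A L (I : finType) (F : I -> 'M[R]_m) :
  (forall i, exists2 s, homog L s & comb_mx A s = F i) ->
  exists2 s, homog L s & comb_mx A s = \sum_i F i.
Proof.
move=> HF; apply: (big_ind (fun M => exists2 s, homog L s & comb_mx A s = M)) => //.
- by exists [::]; rewrite /comb_mx ?big_nil.
- move=> x y [s Hs <-] [t Ht <-]; exists (s ++ t); first by rewrite homog_cat Hs.
  exact: comb_mx_cat.
Qed.

Lemma words_span_succ A (B : 'I_N -> 'M[R]_m) L :
  \sum_i A i *m B i = 1%:M -> words_span A L -> words_span A L.+1.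
Proof.
move=> AB1 spanA M; rewrite -[M]mul1mx -AB1 mulmx_suml.
apply: homog_sum => i; have [s Hs Es] := spanA (B i *m M).
exists (comb_mul [:: (1, [:: i])] s); first exact: (homog_mul (L1 := 1)).
by rewrite comb_mx_mul comb_mx_letter Es mulmxA.
Qed.

Lemma words_span_ge A (B : 'I_N -> 'M[R]_m) l L :
  \sum_i A i *m B i = 1%:M -> words_span A l -> (l <= L)%N -> words_span A L.
Proof.
move=> AB1 spanA; elim: L => [|L IH]; first by rewrite leqn0 => /eqP <-.
by rewrite leq_eqVlt ltnS => /predU1P [<- // | /IH]; apply: words_span_succ AB1.
Qed.

Lemma words_span_letter A L :
  (0 < L)%N -> (1%:M : 'M[R]_m) != 0 -> words_span A L -> exists i, A i != 0.
Proof.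
move=> L_gt0 mx1_neq0 spanA; apply/existsP; apply: contraR mx1_neq0.
move=> /existsPn A0; have [s /allP Hs <-] := spanA 1%:M.
rewrite /comb_mx big1_seq // => -[a [|i w]] /andP [_ /Hs] /=.
  by rewrite eq_sym gtn_eqF.
by rewrite (eqP (negbNE (A0 i))) mul0mx scaler0.
Qed.

Lemma mxtrace_comb A (u : 'M[R]_m) s :
  \tr (u *m comb_mx A s) = \sum_(p <- s) p.1 * \tr (u *m word_mx A p.2).
Proof.
rewrite /comb_mx mulmx_sumr raddf_sum; apply: eq_bigr => p _.
by rewrite -scalemxAr; exact: mxtraceZ.
Qed.

Lemma mxtrace_comb_prop A At (u ut : 'M[R]_m) (ph : R) L s :
  (forall w, size w = L -> \tr (u *m word_mx A w) = ph * \tr (ut *m word_mx At w)) ->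
  homog L s -> \tr (u *m comb_mx A s) = ph * \tr (ut *m comb_mx At s).
Proof.
move=> Htr /allP Hs; rewrite !mxtrace_comb mulr_sumr; apply: eq_big_seq => p ps.
by rewrite Htr ?(eqP (Hs _ ps)) // mulrCA.
Qed.

(* Choosing, for each [M], some combination representing it gives a linear map
   precisely because [A]-relations between combinations are [At]-relations. *)
Lemma comb_transfer A At L :
  words_span A L ->
  (forall s, homog L s -> comb_mx A s = 0 -> comb_mx At s = 0) ->
  exists Phi : {linear 'M[R]_m -> 'M[R]_m},
    forall s, homog L s -> Phi (comb_mx A s) = comb_mx At s.
Proof.
move=> spanA kerA.
have ex_rep M : exists s, homog L s /\ comb_mx A s = M.
  by have [s] := spanA M; exists s.
pose rep M := proj1_sig (constructive_indefinite_description _ (ex_rep M)).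
have repP M : homog L (rep M) /\ comb_mx A (rep M) = M.
  by rewrite /rep; case: constructive_indefinite_description => s [].
pose Phi M := comb_mx At (rep M).
have PhiE s : homog L s -> Phi (comb_mx A s) = comb_mx At s.
  move=> Hs; have [Hr Er] := repP (comb_mx A s); apply/eqP; rewrite -subr_eq0.
  rewrite -scaleN1r -comb_mx_scale -comb_mx_cat; apply/eqP/kerA.
    by rewrite homog_cat homog_scale Hr.
  by rewrite comb_mx_cat comb_mx_scale Er scaleN1r addrN.
have Phi_lin : linear Phi.
  move=> a M1 M2; have [H1 <-] := repP M1; have [H2 <-] := repP M2.
  by rewrite -comb_mx_scale -comb_mx_cat !PhiE ?comb_mx_cat ?comb_mx_scale
    // homog_cat homog_scale H1.
by exists (HB.pack_for {linear 'M[R]_m -> 'M[R]_m} Phi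
  (GRing.isLinear.Build _ _ _ _ Phi Phi_lin)).
Qed.

End Words.

Section MatrixUnits.
Variables (R : fieldType) (m : nat).

Lemma mx_neq0_entry p q (M : 'M[R]_(p, q)) : M != 0 -> exists i j, M i j != 0.
Proof.
move=> M_neq0; have /existsP [i /existsP [j Mij]] : [exists i, exists j, M i j != 0].
  apply: contraR M_neq0 => /existsPn M0; apply/eqP/matrixP => i j.
  by have /existsPn/(_ j)/negPn/eqP -> := M0 i; rewrite mxE.
by exists i, j.
Qed.

Lemma non_unitmx_ker (X : 'M[R]_m) :
  X \notin unitmx -> exists2 y : 'rV_m, y != 0 & y *m X = 0.
Proof.
rewrite -row_free_unit -kermx_eq0 => /rowV0Pn [y /sub_kermxP yX y_neq0].
by exists y.
Qed.

Lemma mxtrace_mul_eq0 (X : 'M[R]_m) : (forall M, \tr (X *m M) = 0) -> X = 0.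
Proof.
move=> trX0; apply/matrixP => i j; rewrite mxE -[RHS](trX0 (delta_mx j i)).
rewrite /mxtrace (bigD1 i) //= big1 => [|k ki]; rewrite mxE.
  rewrite (bigD1 j) //= big1 => [|l lj]; first by rewrite !mxE !eqxx mulr1 !addr0.
  by rewrite !mxE (negbTE lj) mulr0.
by rewrite big1 // => l _; rewrite !mxE (negbTE ki) andbF mulr0.
Qed.

Lemma delta_mulmxE n p (r : 'I_p) (k : 'I_m) (B : 'M[R]_(m, n)) i j :
  (delta_mx r k *m B) i j = (i == r)%:R * B k j.
Proof.
rewrite mxE (bigD1 k) //= big1 ?addr0 => [|l lk]; first by rewrite mxE eqxx andbT.
by rewrite mxE (negbTE lk) andbF mul0r.
Qed.

Lemma mulmx_deltaE n p (B : 'M[R]_(n, m)) (k : 'I_m) (s : 'I_p) i j :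
  (B *m delta_mx k s) i j = B i k * (j == s)%:R.
Proof.
rewrite mxE (bigD1 k) //= big1 ?addr0 => [|l lk]; first by rewrite mxE eqxx.
by rewrite mxE (negbTE lk) mulr0.
Qed.

Lemma delta_mx_sandwich (B : 'M[R]_m) (r p q z : 'I_m) :
  delta_mx r p *m B *m delta_mx q z = B p q *: delta_mx r z.
Proof.
apply/matrixP => k l; rewrite mulmx_deltaE delta_mulmxE !mxE.
by case: (k == r); case: (l == z); rewrite ?mulr0 ?mul0r ?mulr1 ?mul1r.
Qed.

Lemma row_sandwich_eq0 (y : 'rV[R]_m) (Q : 'M[R]_m) :
  y != 0 -> (forall M, y *m M *m Q = 0) -> Q = 0.
Proof.
move=> /mx_neq0_entry [i [k yk]] yQ0; rewrite ord1 {i} in yk.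
apply/row_matrixP => r; rewrite row0 rowE.
have : y *m delta_mx k r *m Q = 0 by [].
have -> : y *m delta_mx k r = y 0 k *: delta_mx 0 r.
  by apply/matrixP => a b; rewrite mulmx_deltaE ord1 !mxE eqxx.
by rewrite -scalemxAl => /eqP; rewrite scaler_eq0 (negbTE yk) => /eqP.
Qed.

Section Nonempty.
Hypothesis m_gt0 : (0 < m)%N.
Let i0 : 'I_m := Ordinal m_gt0.

Lemma mx1_neq0 : (1%:M : 'M[R]_m) != 0.
Proof.
by apply/negP => /eqP/matrixP/(_ i0 i0)/eqP; rewrite !mxE eqxx oner_eq0.
Qed.

Lemma scalar_mx_inj : injective (@scalar_mx R m).
Proof. by move=> a b /matrixP/(_ i0 i0); rewrite !mxE eqxx !mulr1n. Qed.

Lemma comm_all_scalar (T : 'M[R]_m) :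
  (forall M, T *m M = M *m T) -> exists a, T = a%:M.
Proof.
move=> Tc; exists (T i0 i0); apply/matrixP => k l; rewrite !mxE.
have /matrixP/(_ k i0) := Tc (delta_mx l i0).
by rewrite mulmx_deltaE delta_mulmxE eqxx mulr1 mulr_natl.
Qed.

(* Up to the nonzero scalar [A0 p q], every matrix unit [E_rz] is [E_rp A0 E_qz]. *)
Lemma bimodule_map_scalar (G : {linear 'M[R]_m -> 'M[R]_m}) (A0 B0 : 'M[R]_m) :
  A0 != 0 -> (forall M1 M2, G (M1 *m A0 *m M2) = M1 *m B0 *m M2) ->
  exists lam, forall M, G M = lam *: M.
Proof.
move=> /mx_neq0_entry [p [q A0pq]] HG; exists (B0 p q / A0 p q) => M.
have GE r z : G (delta_mx r z) = (B0 p q / A0 p q) *: delta_mx r z.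
  have Erz : delta_mx r z = (A0 p q)^-1 *: (delta_mx r p *m A0 *m delta_mx q z).
    by rewrite delta_mx_sandwich scalerA mulVf // scale1r.
  by rewrite {1}Erz linearZZ HG delta_mx_sandwich scalerA mulrC.
rewrite [M in LHS]matrix_sum_delta [M in RHS]matrix_sum_delta
  linear_sum scaler_sumr.
apply: eq_bigr => r _; rewrite linear_sum scaler_sumr; apply: eq_bigr => z _.
by rewrite linearZZ GE !scalerA mulrC.
Qed.

(* Skolem-Noether for the full matrix algebra: the intertwiner [X] is built
   column by column from the images of the matrix units [E_j0]. *)
Lemma mx_endo_inner (f : {linear 'M[R]_m -> 'M[R]_m}) :
  (forall Y, exists M, f M = Y) ->
  (forall M1 M2, f (M1 *m M2) = f M1 *m f M2) -> f 1%:M = 1%:M ->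
  exists2 X, X \in unitmx & forall M, f M *m X = X *m M.
Proof.
move=> f_surj fM f1.
have fE00 : f (delta_mx i0 i0) != 0.
  apply: contraNneq mx1_neq0 => f0.
  rewrite -f1 [1%:M]mx1_sum_delta linear_sum big1 // => j _.
  have -> : delta_mx j j =
      delta_mx j i0 *m delta_mx i0 i0 *m delta_mx i0 j :> 'M[R]_m.
    by rewrite !mul_delta_mx.
  by rewrite !fM f0 mulmx0 mul0mx.
have [p [q Epq]] := mx_neq0_entry fE00.
pose X := \matrix_(r, j) f (delta_mx j i0) r q.
have XP M : f M *m X = X *m M.
  apply/matrixP => r j.
  have -> : (f M *m X) r j = (f M *m f (delta_mx j i0)) r q.
    by rewrite !mxE; apply: eq_bigr => k _; rewrite mxE.
  rewrite -fM; have -> : M *m delta_mx j i0 = \sum_t M t j *: delta_mx t i0.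
    apply/matrixP => k l; rewrite mulmx_deltaE summxE (bigD1 k) //= big1 ?addr0.
      by rewrite !mxE eqxx.
    by move=> t tk; rewrite !mxE eq_sym (negbTE tk) mulr0.
  rewrite linear_sum summxE mxE; apply: eq_bigr => t _.
  by rewrite linearZZ !mxE mulrC.
exists X => //; apply: contraT => /non_unitmx_ker [y y_neq0 yX].
suff /matrixP/(_ p i0)/eqP : X = 0 by rewrite !mxE (negbTE Epq).
apply: (row_sandwich_eq0 y_neq0) => Y; have [M <-] := f_surj Y.
by rewrite -mulmxA XP mulmxA yX mul0mx.
Qed.

End Nonempty.
End MatrixUnits.

Section Spanning.
Variables (R : fieldType) (m N : nat) (A : 'I_N -> 'M[R]_m).

Lemma word_mx_twist (x y : R) (T : 'M[R]_m) :
  (forall i, x *: (A i *m T) = y *: (T *m A i)) ->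
  forall w, x ^+ size w *: (word_mx A w *m T) = y ^+ size w *: (T *m word_mx A w).
Proof.
move=> AT; elim => [|i w IH] /=; first by rewrite !scale1r mul1mx mulmx1.
rewrite exprS -scalerA -mulmxA scalemxAr IH -scalemxAr scalerA mulrC -scalerA.
by rewrite mulmxA (scalemxAl x) AT -scalemxAl scalerA -exprSr mulmxA.
Qed.

Lemma twist_scalar L (x y : R) (T : 'M[R]_m) :
  (0 < m)%N -> words_span A L -> x != 0 -> T != 0 ->
  (forall i, x *: (A i *m T) = y *: (T *m A i)) -> exists a, T = a%:M.
Proof.
move=> m_gt0 spanA x_neq0 T_neq0 AT.
have twistM M : x ^+ L *: (M *m T) = y ^+ L *: (T *m M).
  have [s /allP Hs <-] := spanA M.
  rewrite /comb_mx mulmx_suml mulmx_sumr !scaler_sumr.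
  apply: eq_big_seq => p ps; rewrite -scalemxAl -scalemxAr !scalerA mulrC.
  by rewrite [y ^+ L * _]mulrC -!scalerA -(eqP (Hs _ ps)) (word_mx_twist AT).
have xy : x ^+ L = y ^+ L.
  have /eqP := twistM 1%:M; rewrite mul1mx mulmx1 -subr_eq0 -scalerBl.
  by rewrite scaler_eq0 (negbTE T_neq0) orbF subr_eq0 => /eqP.
apply: (comm_all_scalar m_gt0) => M; apply: (@scalerI _ _ (x ^+ L)).
  by rewrite expf_neq0.
by rewrite twistM xy.
Qed.

Lemma invariant_kernel_eq0 L (y : 'rV[R]_m) (Q : 'M[R]_m) :
  words_span A L -> y != 0 -> y *m Q = 0 ->
  (forall (z : 'rV[R]_m) i, z *m Q = 0 -> z *m A i *m Q = 0) -> Q = 0.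
Proof.
move=> spanA y_neq0 yQ kerQ; apply: (row_sandwich_eq0 y_neq0) => M.
have yW w : forall z : 'rV[R]_m, z *m Q = 0 -> z *m word_mx A w *m Q = 0.
  by elim: w => [|i w IH] z zQ /=; rewrite ?mulmx1 // mulmxA IH ?kerQ.
have [s _ <-] := spanA M; rewrite /comb_mx mulmx_sumr mulmx_suml big1_seq // => p _.
by rewrite -scalemxAr -scalemxAl yW // scaler0.
Qed.

End Spanning.

Section FixedPoint.
Variables (C : numClosedFieldType) (m N : nat).

Lemma trmxC_mul p q r (X : 'M[C]_(p, q)) (Y : 'M[C]_(q, r)) :
  (X *m Y)^t* = Y^t* *m X^t*.
Proof. by rewrite trmx_mul map_mxM. Qed.

Lemma trmxC_scale p q (a : C) (X : 'M[C]_(p, q)) : (a *: X)^t* = a^* *: X^t*.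
Proof. by apply/matrixP => i j; rewrite !mxE rmorphM. Qed.

Section Psd.
Variables (P : 'M[C]_m) (e : 'rV[C]_m).
Hypothesis e_ge0 : forall k, 0 <= e 0 k.
Local Notation Q := (P^t* *m diag_mx e *m P).

Lemma psd_formE (z : 'rV[C]_m) :
  (z *m Q *m z^t*) 0 0 = \sum_k e 0 k * `|(z *m P^t*) 0 k| ^+ 2.
Proof.
have -> : z *m Q *m z^t* = z *m P^t* *m diag_mx e *m (z *m P^t*)^t*.
  by rewrite trmxC_mul trmxCK !mulmxA.
rewrite mul_mx_diag mxE; apply: eq_bigr => k _.
by rewrite !mxE normCK mulrCA mulrA.
Qed.

Lemma psd_form_eq0 (z : 'rV[C]_m) : (z *m Q *m z^t*) 0 0 = 0 -> z *m Q = 0.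
Proof.
rewrite psd_formE => /psumr_eq0P ez0.
suff zPe0 : z *m P^t* *m diag_mx e = 0 by rewrite !mulmxA zPe0 mul0mx.
apply/matrixP => i k; rewrite ord1 mul_mx_diag [LHS]mxE [RHS]mxE.
have /eqP : e 0 k * `|(z *m P^t*) 0 k| ^+ 2 = 0.
  by apply: ez0 => // j _; rewrite mulr_ge0 ?exprn_ge0.
by rewrite mulf_eq0 expf_eq0 normr_eq0 /= => /orP [] /eqP ->; rewrite ?mulr0 ?mul0r.
Qed.

Lemma psd_form_ge0 (z : 'rV[C]_m) : 0 <= (z *m Q *m z^t*) 0 0.
Proof. by rewrite psd_formE sumr_ge0 // => k _; rewrite mulr_ge0 ?exprn_ge0. Qed.

Lemma fixed_psd_kernel (A : 'I_N -> 'M[C]_m) (y : 'rV[C]_m) i :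
  \sum_j A j *m Q *m (A j)^t* = Q -> y *m Q = 0 -> y *m A i *m Q = 0.
Proof.
move=> QE yQ; apply: psd_form_eq0.
pose F j := (y *m A j *m Q *m (y *m A j)^t*) 0 0.
have sumF : \sum_j F j = 0.
  have -> : \sum_j F j = (y *m Q *m y^t*) 0 0.
    rewrite -QE mulmx_sumr mulmx_suml summxE; apply: eq_bigr => j _.
    by rewrite /F trmxC_mul !mulmxA.
  by rewrite yQ mul0mx mxE.
by apply: (psumr_eq0P _ sumF) => // j _; apply: psd_form_ge0.
Qed.

End Psd.

Lemma real_argmax (I : finType) (i0 : I) (f : I -> C) :
  (forall k, f k \is Num.real) -> exists j, forall k, f k <= f j.
Proof.
move=> f_real; suff [j fj] : exists j, forall k, k \in enum I -> f k <= f j.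
  by exists j => k; apply: fj; rewrite mem_enum.
elim: (enum I) => [|x s [j fj]]; first by exists i0.
have /orP [le_xj | le_jx] := real_leVge (f_real x) (f_real j).
  by exists j => k; rewrite inE => /predU1P [-> //|]; apply: fj.
exists x => k; rewrite inE => /predU1P [-> //|/fj le_kj].
exact: le_trans le_kj le_jx.
Qed.

Lemma herm_fixed_scalar (A : 'I_N -> 'M[C]_m) L (Y : 'M[C]_m) :
  (0 < m)%N -> words_span A L -> \sum_i A i *m (A i)^t* = 1%:M ->
  Y^t* = Y -> \sum_i A i *m Y *m (A i)^t* = Y -> exists mu, Y = mu%:M.
Proof.
move=> m_gt0 spanA A_canon Yh YE.
have Y_herm : Y \is hermsymmx by apply/is_hermitianmxP; rewrite expr0 scale1r Yh.
have /orthomx_spectralP YP := hermitian_normalmx Y_herm.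
set P := spectralmx Y in YP; set d := spectral_diag Y in YP.
have P_unitary : P \is unitarymx := spectral_unitarymx Y.
have [j dj] : exists j, forall k, d 0 k <= d 0 j.
  apply: (real_argmax (Ordinal m_gt0)) => k.
  exact: mxOverP (hermitian_spectral_diag_real Y_herm) 0 k.
pose e := \row_k (d 0 j - d 0 k).
have e_ge0 k : 0 <= e 0 k by rewrite mxE subr_ge0.
(* the top of the spectrum gives a positive semidefinite fixed point with a kernel *)
pose Q := P^t* *m diag_mx e *m P.
have QE : Q = (d 0 j)%:M - Y.
  rewrite /Q; have -> : diag_mx e = (d 0 j)%:M - diag_mx d.
    apply/matrixP => a b; rewrite !mxE; case: eqVneq => [->|_] /=.
      by rewrite !mulr1n.
    by rewrite !mulr0n subr0.
  rewrite YP invmx_unitary // mulmxBr mulmxBl mul_mx_scalar -mul_scalar_mx.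
  by rewrite mulmxKtV.
have Q_fixed : \sum_i A i *m Q *m (A i)^t* = Q.
  rewrite QE; under eq_bigr do rewrite mulmxBr mulmxBl mul_mx_scalar -scalemxAl.
  by rewrite sumrB -scaler_sumr A_canon YE scalemx1.
pose y := row j P.
have yQ : y *m Q = 0.
  rewrite /Q /y rowE !mulmxA -[_ *m P^t*]mulmxA (unitarymxP P_unitary) mulmx1.
  by rewrite -rowE row_diag_mx mxE subrr scale0r mul0mx.
have y_neq0 : y != 0.
  have : y *m P^t* = delta_mx 0 j by rewrite /y -row_mul (unitarymxP P_unitary) row1.
  apply: contraPneq => ->; rewrite mul0mx => /matrixP/(_ 0 j)/eqP.
  by rewrite !mxE !eqxx eq_sym oner_eq0.
exists (d 0 j); apply/eqP; rewrite eq_sym -subr_eq0 -QE.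
apply/eqP/(invariant_kernel_eq0 spanA y_neq0 yQ) => z i zQ.
exact: (fixed_psd_kernel e_ge0).
Qed.

End FixedPoint.

Section Similarity.
Variables (R : fieldType) (m N : nat).
Hypothesis m_gt0 : (0 < m)%N.
Implicit Types (A At : 'I_N -> 'M[R]_m) (psi : {linear 'M[R]_m -> 'M[R]_m}).

Lemma factored_mul_inner psi (Phi : {linear 'M[R]_m -> 'M[R]_m}) :
  (forall Y, exists M, psi M = Y) ->
  (forall M1 M2, Phi (M1 *m M2) = psi M1 *m psi M2) ->
  exists c X, [/\ c != 0, X \in unitmx & forall M, psi M = c *: (X *m M *m invmx X)].
Proof.
move=> psi_surj PhiM.
(* [psi 1] commutes with the image of [psi], which is everything *)
have [c psi1] : exists c, psi 1%:M = c%:M.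
  apply: (comm_all_scalar m_gt0) => Y; have [M <-] := psi_surj Y.
  by rewrite -PhiM mul1mx -[M in Phi M]mulmx1 PhiM.
have psiM M1 M2 : psi M1 *m psi M2 = c *: psi (M1 *m M2).
  by rewrite -PhiM -{1}[M1 *m M2]mul1mx PhiM psi1 mul_scalar_mx.
have c_neq0 : c != 0.
  apply: (contraNneq _ (mx1_neq0 R m_gt0)) => c0; have [M psiM1] := psi_surj 1%:M.
  by have := psiM M M; rewrite psiM1 mulmx1 c0 scale0r => ->.
have [X X_unit fX] :
    exists2 X, X \in unitmx & forall M, (c^-1 \*: psi) M *m X = X *m M.
  apply: (mx_endo_inner m_gt0) => [Y|M1 M2 /=|/=].
  - have [M psiM_cY] := psi_surj (c *: Y); exists M.
    by rewrite /= psiM_cY scalerA mulVf // scale1r.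
  - rewrite -scalemxAl -scalemxAr scalerA psiM scalerA.
    by rewrite -mulrA mulVf // mulr1.
  - by rewrite psi1 scale_scalar_mx mulVf.
exists c, X; split => // M.
rewrite -[psi M](scalerKV c_neq0) -(mulmxK X_unit (c^-1 *: psi M)).
by have /= -> := fX M.
Qed.

Lemma sandwich_similar A At psi (Phi : {linear 'M[R]_m -> 'M[R]_m}) (c : R) X :
  c != 0 -> X \in unitmx -> (exists j, A j != 0) ->
  (forall M, psi M = c *: (X *m M *m invmx X)) ->
  (forall i M1 M2, Phi (M1 *m A i *m M2) = psi M1 *m At i *m psi M2) ->
  exists lam, forall i, At i = lam *: (X *m A i *m invmx X).
Proof.
move=> c_neq0 X_unit [j Aj] psiE PhiE.
pose G : {linear 'M[R]_m -> 'M[R]_m} :=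
  (c ^+ 2)^-1 \*: (mulmxr X \o mulmx (invmx X) \o Phi).
have GE i M1 M2 : G (M1 *m A i *m M2) = M1 *m (invmx X *m At i *m X) *m M2.
  rewrite /G /= PhiE !psiE; do 2 rewrite -?scalemxAl -?scalemxAr.
  rewrite !scalerA -mulrA -expr2 mulVf ?expf_neq0 // scale1r !mulmxA mulVmx // mul1mx.
  by rewrite mulmxKV.
have [lam Glam] := bimodule_map_scalar Aj (GE j).
exists lam => i; have : invmx X *m At i *m X = lam *: A i.
  by rewrite -Glam -[A i]mul1mx -[_ *m A i]mulmx1 GE mul1mx mulmx1.
move=> /(congr1 (fun M => X *m M *m invmx X)).
by rewrite !mulmxA mulmxV // mul1mx mulmxK // -scalemxAr -scalemxAl.
Qed.

End Similarity.

Section TraceSimilarity.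
Variables (R : fieldType) (m N : nat) (A At : 'I_N -> 'M[R]_m).

Lemma word_mx_similar (X : 'M[R]_m) (lam : R) :
  X \in unitmx -> (forall i, At i = lam *: (X *m A i *m invmx X)) ->
  forall w, word_mx At w = lam ^+ size w *: (X *m word_mx A w *m invmx X).
Proof.
move=> X_unit AtE; elim => [|i w IH] /=; first by rewrite scale1r mulmx1 mulmxV.
rewrite AtE IH -scalemxAl -scalemxAr scalerA -exprS !mulmxA.
by rewrite -[_ *m invmx X *m X]mulmxA mulVmx // mulmx1.
Qed.

Lemma trace_prop_kernel (u ut : 'M[R]_m) (ph : R) L K :
  ut \in unitmx -> words_span At K ->
  (forall w, size w = (L + K)%N ->
     \tr (ut *m word_mx At w) = ph * \tr (u *m word_mx A w)) ->
  forall s, homog L s -> comb_mx A s = 0 -> comb_mx At s = 0.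
Proof.
move=> ut_unit spanAt trE s Hs As0.
suff /(congr1 (mulmx (invmx ut))) : ut *m comb_mx At s = 0.
  by rewrite mulmxA mulVmx // mul1mx mulmx0.
apply: mxtrace_mul_eq0 => M; have [t Ht <-] := spanAt M.
rewrite -mulmxA -comb_mx_mul (mxtrace_comb_prop trE) ?homog_mul //.
by rewrite comb_mx_mul As0 mul0mx mulmx0 mxtrace0 mulr0.
Qed.

(* The linear transfer maps at lengths [K], [2K] and [2K + 1] exhibit [At] as a
   twisted copy of [A]: the first is a scaled inner automorphism, the others
   factor through it. *)
Lemma similar_of_comb_kernel lA lAt :
  (0 < m)%N ->
  (forall L, (lA <= L)%N -> words_span A L) ->
  (forall L, (lAt <= L)%N -> words_span At L) ->
  (forall L s, homog L s -> comb_mx A s = 0 -> comb_mx At s = 0) ->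
  exists2 X, X \in unitmx & exists lam, forall i, At i = lam *: (X *m A i *m invmx X).
Proof.
move=> m_gt0 spanA spanAt kerA; pose K := (lA + lAt).+1.
have lA_K : (lA <= K)%N by rewrite ltnW // ltnS leq_addr.
have spanAK := spanA K lA_K.
have spanAtK : words_span At K by apply: spanAt; rewrite ltnW // ltnS leq_addl.
have transfer L : (lA <= L)%N -> exists Phi : {linear 'M[R]_m -> 'M[R]_m},
    forall s, homog L s -> Phi (comb_mx A s) = comb_mx At s.
  by move=> lA_L; apply: comb_transfer (spanA L lA_L) (kerA L).
have [psi psiE] := transfer K lA_K.
have [Phi2 Phi2E] := transfer (K + K)%N (leq_trans lA_K (leq_addr _ _)).
have [Phi3 Phi3E] := transfer (K + 1 + K)%N
  (leq_trans lA_K (leq_trans (leq_addr 1 K) (leq_addr K _))).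
have psi_surj Y : exists M, psi M = Y.
  by have [t Ht <-] := spanAtK Y; exists (comb_mx A t); apply: psiE.
have [c [X [c_neq0 X_unit psiX]]] : exists c X,
    [/\ c != 0, X \in unitmx & forall M, psi M = c *: (X *m M *m invmx X)].
  apply: (factored_mul_inner m_gt0 psi_surj (Phi := Phi2)) => M1 M2.
  have [s1 H1 <-] := spanAK M1; have [s2 H2 <-] := spanAK M2.
  rewrite -comb_mx_mul Phi2E; last exact: (homog_mul H1 H2).
  by rewrite comb_mx_mul !psiE.
exists X => //; apply: (sandwich_similar c_neq0 X_unit _ psiX (Phi := Phi3)).
  by apply: (words_span_letter (L := K)) => //; apply: mx1_neq0.
move=> i M1 M2; have [s1 H1 <-] := spanAK M1; have [s2 H2 <-] := spanAK M2.
rewrite -(comb_mx_letter A i) -!comb_mx_mul Phi3E; last first.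
  exact: (homog_mul (homog_mul H1 (isT : homog 1 [:: (1 : R, [:: i])])) H2).
by rewrite !comb_mx_mul comb_mx_letter !psiE.
Qed.

End TraceSimilarity.

Section Unitary.
Variables (C : numClosedFieldType) (m N : nat).
Hypothesis m_gt0 : (0 < m)%N.
Implicit Types (A At : 'I_N -> 'M[C]_m).

Lemma unitarymx_tmul (V : 'M[C]_m) : V \is unitarymx -> V^t* *m V = 1%:M.
Proof.
by move=> V_unitary; rewrite -{2}[V]trmxCK; apply/unitarymxP; rewrite trmxC_unitary.
Qed.

Lemma similar_phase_norm1 A At (X u ut : 'M[C]_m) (lam ph : C) K :
  (0 < K)%N -> words_span A K -> X \in unitmx ->
  (forall i, At i = lam *: (X *m A i *m invmx X)) ->
  u *m u = 1%:M -> ut *m ut = 1%:M -> `|ph| = 1 ->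
  (forall w, size w = K ->
     \tr (u *m word_mx A w) = ph * \tr (ut *m word_mx At w)) ->
  `|lam| = 1.
Proof.
move=> K_gt0 spanA X_unit AtE uu utut ph1 trE.
(* the trace identity pins [u] down as [kap] times a conjugate of [ut] *)
pose kap := ph * lam ^+ K; pose v := kap *: (invmx X *m ut *m X).
have trv w : size w = K -> \tr (u *m word_mx A w) = 1 * \tr (v *m word_mx A w).
  move=> Kw; rewrite trE // (word_mx_similar X_unit AtE) Kw mul1r -scalemxAr.
  rewrite -scalemxAl !mxtraceZ mulrA; congr (_ * _).
  by rewrite !mulmxA mxtrace_mulC !mulmxA.
have uv : u = v.
  apply/eqP; rewrite -subr_eq0; apply/eqP/mxtrace_mul_eq0 => M.
  have [s Hs <-] := spanA M.
  by rewrite mulmxBl raddfB /= (mxtrace_comb_prop trv Hs) mul1r subrr.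
have kap2 : kap ^+ 2 = 1.
  apply: (scalar_mx_inj m_gt0); rewrite -scalemx1 -[RHS]uu uv /v -scalemxAl.
  rewrite -scalemxAr scalerA -expr2 !mulmxA mulmxK // -[_ *m ut *m ut]mulmxA.
  by rewrite utut mulmx1 mulVmx.
have : `|kap| ^+ 2 = 1 by rewrite -normrX kap2 normr1.
move/eqP; rewrite pexpr_eq1 // normrM ph1 mul1r normrX pexpr_eq1 //.
by move/eqP.
Qed.

Lemma similar_canon_fixed A At (X : 'M[C]_m) (lam : C) :
  \sum_i At i *m (At i)^t* = 1%:M -> X \in unitmx -> `|lam| = 1 ->
  (forall i, At i = lam *: (X *m A i *m invmx X)) ->
  let Y := invmx X *m (invmx X)^t* in \sum_i A i *m Y *m (A i)^t* = Y.
Proof.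
move=> At_canon X_unit lam1 AtE Y.
have XYX : X *m (\sum_i A i *m Y *m (A i)^t*) *m X^t* = 1%:M.
  rewrite -At_canon mulmx_sumr mulmx_suml; apply: eq_bigr => i _.
  rewrite AtE trmxC_scale -scalemxAl -scalemxAr scalerA -normCK lam1 expr1n.
  by rewrite scale1r !trmxC_mul !mulmxA.
have XtXit : X^t* *m (invmx X)^t* = 1%:M.
  by rewrite -trmxC_mul mulVmx // trmx1 map_mx1.
rewrite -[LHS]mul1mx -(mulVmx X_unit) -[LHS]mulmx1 -XtXit mulmxA.
by rewrite -[invmx X *m X *m _]mulmxA -(mulmxA (invmx X)) XYX mulmx1.
Qed.

Lemma similar_unitary A At (X : 'M[C]_m) (lam : C) L :
  words_span A L -> \sum_i A i *m (A i)^t* = 1%:M ->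
  \sum_i At i *m (At i)^t* = 1%:M -> X \in unitmx -> `|lam| = 1 ->
  (forall i, At i = lam *: (X *m A i *m invmx X)) ->
  exists2 V, V \is unitarymx & forall i, At i = lam *: (V^t* *m A i *m V).
Proof.
move=> spanA A_canon At_canon X_unit lam1 AtE.
pose Xi := invmx X; pose Y := Xi *m Xi^t*.
have [mu Ymu] : exists mu, Y = mu%:M.
  apply: (herm_fixed_scalar m_gt0 spanA A_canon); first by rewrite trmxC_mul trmxCK.
  exact: similar_canon_fixed At_canon X_unit lam1 AtE.
have XiE : Xi^t* = mu *: X.
  by rewrite -[Xi^t*]mul1mx -(mulmxV X_unit) -mulmxA -/Y Ymu mul_mx_scalar.
have mu_gt0 : 0 < mu.
  rewrite lt_def; apply/andP; split.
    apply: (contraNneq _ (mx1_neq0 C m_gt0)) => mu0; rewrite -(mulmxV X_unit).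
    by rewrite -[invmx X]trmxCK -/Xi XiE mu0 scale0r trmx0 map_mx0 mulmx0.
  have /matrixP/(_ (Ordinal m_gt0) (Ordinal m_gt0)) := Ymu.
  rewrite !mxE eqxx mulr1n => <-.
  by apply: sumr_ge0 => k _; rewrite !mxE mul_conjC_ge0.
pose sq := sqrtC mu.
have sq_neq0 : sq != 0 by rewrite gt_eqF // sqrtC_gt0.
have sq2 : sq * sq = mu by rewrite -expr2 sqrtCK.
have sqV_conj : (sq^-1)^* = sq^-1 by rewrite fmorphV /= geC0_conj ?sqrtC_ge0 ?ltW.
exists (sq^-1 *: Xi) => [|i].
  apply/unitarymxP; rewrite trmxC_scale -scalemxAl -scalemxAr scalerA -/Y Ymu.
  by rewrite sqV_conj -invfM sq2 scale_scalar_mx mulVf // gt_eqF.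
rewrite AtE trmxC_scale sqV_conj XiE -!scalemxAl -scalemxAr !scalerA.
by rewrite -sq2 mulrAC -!mulrA mulKf // mulVf // mulr1.
Qed.

Lemma trace_prop_unitary A At (u ut : 'M[C]_m) lA lAt :
  (forall L, (lA <= L)%N -> words_span A L) ->
  (forall L, (lAt <= L)%N -> words_span At L) ->
  \sum_i A i *m (A i)^t* = 1%:M -> \sum_i At i *m (At i)^t* = 1%:M ->
  u *m u = 1%:M -> ut *m ut = 1%:M ->
  (forall L, exists ph : C, `|ph| = 1 /\ forall w, size w = L ->
     \tr (u *m word_mx A w) = ph * \tr (ut *m word_mx At w)) ->
  exists V b, [/\ V \is unitarymx, `|b| = 1 &
    forall i, At i = b *: (V^t* *m A i *m V)].
Proof.
move=> spanA spanAt A_canon At_canon uu utut trE.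
have ut_unit : ut \in unitmx by case: (mulmx1_unit utut).
have kerA L s : homog L s -> comb_mx A s = 0 -> comb_mx At s = 0.
  have [ph [ph1 trL]] := trE (L + lAt)%N.
  have ph_neq0 : ph != 0 by rewrite -normr_eq0 ph1 oner_neq0.
  apply: (trace_prop_kernel (u := u) (ph := ph^-1) ut_unit (spanAt _ (leqnn _))).
  by move=> w Lw; rewrite trL // mulKf.
have [X X_unit [lam AtE]] := similar_of_comb_kernel m_gt0 spanA spanAt kerA.
have [ph [ph1 trK]] := trE lA.+1.
have lam1 := similar_phase_norm1 (ltn0Sn _) (spanA _ (leqnSn _)) X_unit AtE
  uu utut ph1 trK.
have [V V_unitary AtV] :=
  similar_unitary (spanA _ (leqnn _)) A_canon At_canon X_unit lam1 AtE.
by exists V, lam.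
Qed.

Lemma unitary_trace_phase A At (V u : 'M[C]_m) (b : C) :
  V \is unitarymx -> `|b| = 1 -> (forall i, At i = b *: (V^t* *m A i *m V)) ->
  forall w, \tr (u *m word_mx A w) =
    (b^*) ^+ size w * \tr ((V^t* *m u *m V) *m word_mx At w).
Proof.
move=> V_unitary b1 AtE w.
have Vt_unit : V^t* \in unitmx by rewrite unitarymx_unit ?trmxC_unitary.
have invVt : invmx (V^t*) = V by rewrite invmx_unitary ?trmxC_unitary ?trmxCK.
have AtVt i : At i = b *: (V^t* *m A i *m invmx (V^t*)) by rewrite invVt AtE.
rewrite (word_mx_similar Vt_unit AtVt) invVt -scalemxAr mxtraceZ mulrA -exprMn.
rewrite [b^* * b]mulrC -normCK b1 !expr1n mul1r !mulmxA mulmxtVK //.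
by rewrite [RHS]mxtrace_mulC !mulmxA (unitarymxP V_unitary) mul1mx.
Qed.

Lemma unitary_related_uniq A L (V V' : 'M[C]_m) (b b' : C) :
  words_span A L -> (exists j, A j != 0) ->
  V \is unitarymx -> V' \is unitarymx -> `|b| = 1 ->
  (forall i, b *: (V^t* *m A i *m V) = b' *: (V'^t* *m A i *m V')) ->
  b' = b /\ exists d : C, `|d| = 1 /\ V' = d *: V.
Proof.
move=> spanA [j Aj] V_unitary V'_unitary b1 AVV'.
pose T := V *m V'^t*.
have TT : T *m T^t* = 1%:M.
  by rewrite trmxC_mul trmxCK mulmxA mulmxKtV // (unitarymxP V_unitary).
have AT i : b *: (A i *m T) = b' *: (T *m A i).
  have := congr1 (fun M => V *m M *m V'^t*) (AVV' i).
  rewrite /= -!scalemxAr -!scalemxAl !mulmxA (unitarymxP V_unitary) mul1mx.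
  by rewrite mulmxtVK.
have T_neq0 : T != 0.
  by apply: contra_neq (mx1_neq0 C m_gt0) => T0; rewrite -TT T0 mul0mx.
have b_neq0 : b != 0 by rewrite -normr_eq0 b1 oner_neq0.
have [d Td] := twist_scalar m_gt0 spanA b_neq0 T_neq0 AT.
have d_neq0 : d != 0 by apply: (contra_neq _ T_neq0) => d0; rewrite Td d0 raddf0.
have [p [q Ajpq]] := mx_neq0_entry Aj.
split.
  have /matrixP/(_ p q) := AT j.
  rewrite Td mul_mx_scalar mul_scalar_mx !scalerA !mxE.
  by move=> /(mulIf Ajpq)/(mulIf d_neq0).
have dd : d * d^* = 1.
  apply: (scalar_mx_inj m_gt0).
  by rewrite -TT Td tr_scalar_mx map_scalar_mx -scalar_mxM.
exists d^*; split.
  by rewrite norm_conjC; apply/eqP; rewrite -(@pexpr_eq1 _ _ 2) // normCK dd.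
have : V^t* *m T = V'^t* by rewrite mulmxA unitarymx_tmul // mul1mx.
rewrite Td mul_mx_scalar => /(congr1 (fun M => M^t*)).
by rewrite trmxC_scale !trmxCK => ->.
Qed.

Lemma grading_unique At L (sg : 'I_N -> C) (Z1 Z2 : 'M[C]_m) :
  words_span At L -> Z1 *m Z1 = 1%:M -> Z2 *m Z2 = 1%:M ->
  (forall i, sg i *: At i = Z1 *m At i *m Z1) ->
  (forall i, sg i *: At i = Z2 *m At i *m Z2) ->
  exists2 d : C, d ^+ 2 = 1 & Z2 = d *: Z1.
Proof.
move=> spanAt Z11 Z22 AZ1 AZ2; pose T := Z2 *m Z1.
have AT i : 1 *: (At i *m T) = 1 *: (T *m At i).
  have E : Z2 *m At i *m Z2 = Z1 *m At i *m Z1 by rewrite -AZ1 -AZ2.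
  have -> : At i *m T = Z2 *m (Z2 *m At i *m Z2) *m Z1.
    by rewrite !mulmxA Z22 mul1mx.
  by rewrite E !mulmxA -(mulmxA _ Z1 Z1) Z11 mulmx1.
have T_neq0 : T != 0.
  apply: (contra_neq _ (mx1_neq0 C m_gt0)) => T0.
  by rewrite -Z22 -[Z2 in Z2 *m _]mulmx1 -Z11 !mulmxA -/T T0 !mul0mx.
have [d Td] := twist_scalar m_gt0 spanAt (oner_neq0 C) T_neq0 AT.
have Z2E : Z2 = d *: Z1 by rewrite -[Z2]mulmx1 -Z11 mulmxA -/T Td mul_scalar_mx.
exists d => //; apply: (scalar_mx_inj m_gt0); rewrite -Z22 Z2E -scalemxAl.
by rewrite -scalemxAr scalerA Z11 -expr2 scalemx1.
Qed.

Lemma unitary_conj_grading A At (sg : 'I_N -> C) (V Z : 'M[C]_m) (b : C) :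
  V \is unitarymx -> (forall i, At i = b *: (V^t* *m A i *m V)) ->
  (forall i, sg i *: A i = Z *m A i *m Z) ->
  forall i, sg i *: At i = (V^t* *m Z *m V) *m At i *m (V^t* *m Z *m V).
Proof.
move=> V_unitary AtE AZ i.
rewrite AtE -scalemxAr -scalemxAl scalerA mulrC -scalerA; congr (_ *: _).
by rewrite (scalemxAl (sg i)) scalemxAr AZ !mulmxA !mulmxtVK.
Qed.

Lemma unitary_wall A At (sg : 'I_N -> C) L (V Z Zt u ut : 'M[C]_m) (b : C) :
  words_span At L -> V \is unitarymx ->
  (forall i, At i = b *: (V^t* *m A i *m V)) ->
  Z *m Z = 1%:M -> Zt *m Zt = 1%:M ->
  (forall i, sg i *: A i = Z *m A i *m Z) ->
  (forall i, sg i *: At i = Zt *m At i *m Zt) ->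
  (u = Z \/ u = - Z) -> (ut = Zt \/ ut = - Zt) ->
  exists eta : C, (eta = 1 \/ eta = -1) /\ ut = eta *: (V^t* *m u *m V).
Proof.
move=> spanAt V_unitary AtE ZZ ZtZt AZ AtZt uZ utZt.
have ZV2 : V^t* *m Z *m V *m (V^t* *m Z *m V) = 1%:M.
  by rewrite !mulmxA mulmxtVK // -[_ *m Z *m Z]mulmxA ZZ mulmx1 unitarymx_tmul.
have [d d2 ZtE] := grading_unique spanAt ZV2 ZtZt
  (unitary_conj_grading V_unitary AtE AZ) AtZt.
have sign_sq (x : C) : (x = 1 \/ x = -1) <-> x ^+ 2 = 1.
  split=> [[] ->|/eqP]; rewrite ?sqrrN ?expr1n // sqrf_eq1 => /orP [] /eqP; auto.
have [eu [eu2 ZE]] : exists eu : C, eu ^+ 2 = 1 /\ Z = eu *: u.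
  by case: uZ => ->; [exists 1 | exists (-1)]; rewrite ?scale1r ?scaleN1r ?opprK;
    split=> //; apply/sign_sq; auto.
have [et [et2 utE]] : exists et : C, et ^+ 2 = 1 /\ ut = et *: Zt.
  by case: utZt => ->; [exists 1 | exists (-1)]; rewrite ?scale1r ?scaleN1r;
    split=> //; apply/sign_sq; auto.
exists (et * d * eu); split.
  by apply/sign_sq; rewrite !exprMn et2 d2 eu2 !mul1r.
by rewrite utE ZtE ZE -scalemxAr -scalemxAl !scalerA.
Qed.

End Unitary.

Section GradedMPS.
Variables (C : numClosedFieldType) (n N : nat) (par : 'I_N -> bool).
Implicit Types (A At : 'I_N -> 'M[C]_(n + n)) (u V Z : 'M[C]_(n + n)).

Lemma sigmaz_id_sq : sigmaz_id C n *m sigmaz_id C n = 1%:M.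
Proof.
rewrite /sigmaz_id mulmx_block !mulmx0 !mul0mx !addr0 !add0r mulmx1 mulmxN mulNmx.
by rewrite mulmx1 opprK -scalar_mx_block.
Qed.

Lemma grading_like_sq Z : grading_like Z -> Z *m Z = 1%:M.
Proof.
case=> W [W_unitary ->]; rewrite !mulmxA mulmxKtV // -(mulmxA W) sigmaz_id_sq.
by rewrite mulmx1 (unitarymxP W_unitary).
Qed.

Lemma grading_like_conj V Z : V \is unitarymx -> grading_like Z ->
  grading_like (V^t* *m Z *m V).
Proof.
move=> V_unitary [W [W_unitary ->]]; exists (V^t* *m W); split.
  by rewrite mul_unitarymx // trmxC_unitary.
by rewrite trmxC_mul trmxCK !mulmxA.
Qed.

Lemma wall_sq A u : is_wall par A u -> u *m u = 1%:M.
Proof.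
by case=> Z [[/grading_like_sq ZZ _] [] ->]; rewrite ?mulNmx ?mulmxN ?opprK.
Qed.

Lemma injective_plus_span A : injective_plus A -> exists l, words_span A l.
Proof.
case=> l spanA; exists l => M; have [c ->] := spanA M.
exists [seq (c w, tval w) | w <- index_enum {: l.-tuple 'I_N}].
  by apply/allP => _ /mapP [w _ ->] /=; rewrite size_tuple.
by rewrite /comb_mx big_map.
Qed.

Lemma unit_related_trace_phase A At V b u : unit_related A At V b ->
  forall L, exists ph : C, `|ph| = 1 /\ forall w : L.-tuple 'I_N,
    \tr (u *m wprod A w) = ph * \tr ((V^t* *m u *m V) *m wprod At w).
Proof.
case=> V_unitary [b1 AtE] L; exists ((b^*) ^+ L); split.
  by rewrite normrX norm_conjC b1 expr1n.
by move=> w; rewrite (unitary_trace_phase u V_unitary b1 AtE) size_tuple.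
Qed.

Section Canonical.
Variables (A At : 'I_N -> 'M[C]_(n + n)) (lA lAt : nat).
Hypothesis n_gt0 : (0 < n)%N.
Let nn_gt0 : (0 < n + n)%N := leq_trans n_gt0 (leq_addr n n).
Hypotheses (A_canon : canonical_fMPS A) (At_canon : canonical_fMPS At).
Hypotheses (spanA : words_span A lA) (spanAt : words_span At lAt).

Lemma trace_phase_unit_related u ut :
  u *m u = 1%:M -> ut *m ut = 1%:M ->
  (forall L, exists ph : C, `|ph| = 1 /\ forall w : L.-tuple 'I_N,
     \tr (u *m wprod A w) = ph * \tr (ut *m wprod At w)) ->
  exists V b, unit_related A At V b.
Proof.
move=> uu utut trE.
have [|V [b [V_unitary b1 AtE]]] := trace_prop_unitary nn_gt0
  (fun L => words_span_ge A_canon spanA) (fun L => words_span_ge At_canon spanAt)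
  A_canon At_canon uu utut.
  move=> L; have [ph [ph1 trL]] := trE L; exists ph; split=> // w /eqP Lw.
  exact: (trL (Tuple Lw)).
by exists V, b.
Qed.
End Canonical.
End GradedMPS.

Theorem mainTheorem1 (R : realType) (n N : nat) (par : 'I_N -> bool)
    (A At : 'I_N -> 'M[R[i]]_(n + n)) :
  (1 <= n)%N -> (1 <= N)%N ->
  is_fMPS par A -> is_fMPS par At ->
  canonical_fMPS A -> canonical_fMPS At ->
  injective_plus A -> injective_plus At ->
  (gauge_equiv A At <-> exists V b, unit_related A At V b) /\
  (gauge_equiv_PBC par A At <-> exists V b, unit_related A At V b) /\
  (forall V b V' b', unit_related A At V b -> unit_related A At V' b' ->
     b' = b /\ exists d : R[i], `|d| = 1 /\ V' = d *: V) /\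
  (forall V b, unit_related A At V b ->
     forall u ut, is_wall par A u -> is_wall par At ut ->
       exists eta : R[i], (eta = 1 \/ eta = -1) /\
         ut = eta *: (V^t* *m u *m V)).
Proof.
move=> n_gt0 _ [Z [GZ AZ]] [Zt [GZt AtZt]] A_canon At_canon
  /injective_plus_span [lA spanA] /injective_plus_span [lAt spanAt].
have nn_gt0 : (0 < n + n)%N by rewrite addn_gt0 n_gt0.
have related := trace_phase_unit_related n_gt0 A_canon At_canon spanA spanAt.
have spanA1 := words_span_ge A_canon spanA (leqnSn lA).
have spanAtL := words_span_ge At_canon spanAt (leqnn lAt).
split; [|split; [|split]].
- split=> [trE | [V [b rel]] L].
    apply: (related 1%:M 1%:M); rewrite ?mulmx1 // => L.
    by have [ph [ph1 trL]] := trE L; exists ph; split=> // w; rewrite !mul1mx.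
  have [ph [ph1 trL]] := unit_related_trace_phase 1%:M rel L; exists ph; split=> // w.
  by rewrite -[wprod A w]mul1mx trL mulmx1 unitarymx_tmul ?mul1mx //; case: rel.
- split=> [[u [ut [wu [wut trE]]]] | [V [b rel]]].
    exact: related (wall_sq wu) (wall_sq wut) trE.
  have [V_unitary [_ AtE]] := rel.
  exists Z, (V^t* *m Z *m V); split; first by exists Z; split; [split | left].
  split; last exact: unit_related_trace_phase rel.
  exists (V^t* *m Z *m V); split; last by left.
  by split; [apply: grading_like_conj | apply: unitary_conj_grading AtE AZ].
- move=> V b V' b' [V_unitary [b1 AtE]] [V'_unitary [_ AtE']].
  apply: (unitary_related_uniq nn_gt0 spanA1 _ V_unitary V'_unitary b1).
    exact: words_span_letter (ltn0Sn lA) (mx1_neq0 _ nn_gt0) spanA1.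
  by move=> i; rewrite -AtE -AtE'.
- move=> V b [V_unitary [_ AtE]] u ut [Z1 [[GZ1 AZ1] uZ1]] [Z2 [[GZ2 AtZ2] utZ2]].
  exact: (unitary_wall nn_gt0 spanAtL V_unitary AtE (grading_like_sq GZ1)
    (grading_like_sq GZ2) AZ1 AtZ2 uZ1 utZ2).
Qed.
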